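(* Let $G$ be a connected bipartite graph with an even number $q$ of edges that contains exactly one pendant vertex (vertex of degree $1$). Then $\chi_{la}(G)\ge 3$.
   Context: For a connected graph $G=(V,E)$ with $q=|E|$, a local antimagic labeling is a bijection $f:E\to\{1,\dots,q\}$ such that for every pair of adjacent vertices $x,y$ we have $f^+(x)\ne f^+(y)$, where $f^+(x)=\sum f(e)$ over all edges $e$ incident to $x$. The color number $c(f)$ is the number of distinct values of $f^+$, and the local antimagic chromatic number $\chi_{la}(G)$ is the minimum of $c(f)$ over all local antimagic labelings $f$ of $G$. *)

From mathcomp Require Import all_boot all_order.
Set Implicit Arguments. Unset Strict Implicit. Unset Printing Implicit Defensive.

Section Graph.
Variables (T : finType) (adj : rel T).

Definition simple_graph := symmetric adj /\ irreflexive adj.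

Definition edges : {set {set T}} := [set [set x; y] | x in T, y in T & adj x y].

Definition connected_graph := forall x y : T, connect adj x y.

Definition bipartite := exists A : {set T},
  forall x y, adj x y -> (x \in A) != (y \in A).

Definition degree (x : T) : nat := #|[set y | adj x y]|.

Definition n_pendant : nat := #|[set x | degree x == 1]|.

Definition edge_bijection (f : {set T} -> nat) :=
  [/\ {in edges &, injective f},
      forall e, e \in edges -> 1 <= f e <= #|edges| &
      forall k, 1 <= k <= #|edges| -> exists2 e, e \in edges & f e = k].

Definition fplus (f : {set T} -> nat) (x : T) : nat :=
  \sum_(e in edges | x \in e) f e.

Definition local_antimagic (f : {set T} -> nat) :=
  edge_bijection f /\ forall x y, adj x y -> fplus f x != fplus f y.

Definition color_number (f : {set T} -> nat) : nat :=
  size (undup [seq fplus f x | x <- enum T]).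

End Graph.

From mathcomp Require Import all_boot all_order zify.
Set Implicit Arguments. Unset Strict Implicit.

(* Suppose a local antimagic labeling [f] used at most two colors, and let [a]
   be the color of the pendant vertex [u].  Adjacent vertices get different
   colors, so every edge has exactly one end in the class [A] of [a]; summing
   [f^+] over [A] counts every label once, whence [|A| a = q(q+1)/2].  Since
   [a = f(uv) <= q] this forces [2|A| >= q+1], while counting degrees over [A]
   (the vertices of [A] other than [u] have degree at least 2) gives
   [2|A| <= q+1].  Hence [q + 1 = 2|A|] is even. *)

Lemma size_undup_le2_eq (U : eqType) (s : seq U) a x y :
  size (undup s) <= 2 -> a \in s -> x \in s -> y \in s ->
  x != a -> y != a -> x = y.
Proof.
move=> s_le2 a_s x_s y_s xa ya; apply/eqP/negPn/negP => xy.
have : size [:: a; x; y] <= size (undup s).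
  apply: uniq_leq_size; first by rewrite /= !inE negb_or ![a == _]eq_sym xa ya xy.
  by move=> z; rewrite !inE mem_undup => /or3P [] /eqP ->.
by move: s_le2; rewrite /=; lia.
Qed.

Lemma double_triangular_sum q : 2 * \sum_(1 <= k < q.+1) k = q * q.+1.
Proof.
elim: q => [|q IHq]; first by rewrite big_geq.
by rewrite big_nat_recr //= mulnDr IHq; lia.
Qed.

Section Graph.
Variables (T : finType) (adj : rel T).

Definition bipartition (A : {set T}) :=
  forall x y, adj x y -> (x \in A) != (y \in A).

Lemma mem_edges x y : adj x y -> [set x; y] \in edges adj.
Proof. by move=> xy; apply/imset2P; exists x y; rewrite ?inE. Qed.

Lemma edgesP e : e \in edges adj -> exists x y, adj x y /\ e = [set x; y].
Proof. by case/imset2P => x y _; rewrite inE => xy ->; exists x, y. Qed.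

Lemma sum_incident_bipartition (A : {set T}) (g : {set T} -> nat) :
  bipartition A ->
  \sum_(x in A) \sum_(e in edges adj | x \in e) g e = \sum_(e in edges adj) g e.
Proof.
move=> A_bip; under eq_bigr do rewrite big_mkcondr /=.
rewrite exchange_big /=; apply: eq_bigr => e /edgesP [x [y [xy ->]]].
rewrite -big_mkcondr /=.
have [xA | xA] := boolP (x \in A).
- have yA : y \notin A by move: (A_bip x y xy); rewrite xA.
  rewrite (big_pred1 x) // => z; rewrite !inE.
  apply/andP/eqP => [[zA /orP [] /eqP] | ->] //; last by rewrite eqxx.
  by move=> zy; move: zA; rewrite zy (negPf yA).
- have yA : y \in A by move: (A_bip x y xy); rewrite (negPf xA); case: (y \in A).
  rewrite (big_pred1 y) // => z; rewrite !inE.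
  apply/andP/eqP => [[zA /orP [] /eqP] | ->] //; last by rewrite eqxx orbT.
  by move=> zx; move: zA; rewrite zx (negPf xA).
Qed.

Hypothesis adj_simple : simple_graph adj.

Lemma degreeE x : degree adj x = \sum_(e in edges adj | x \in e) 1.
Proof.
case: adj_simple => adj_sym adj_irr.
rewrite sum1dep_card /degree.
have -> : [set e | (e \in edges adj) && (x \in e)] =
          [set [set x; y] | y in [set y | adj x y]].
  apply/setP => e; rewrite inE; apply/andP/imsetP.
  - case=> /edgesP [y [z [yz ->]]]; rewrite !inE => /orP [] /eqP ->.
    + by exists z; rewrite ?inE.
    + by exists y; rewrite 1?setUC // inE adj_sym.
  - by case=> y; rewrite inE => xy ->; rewrite mem_edges // !inE eqxx.
apply/esym/card_in_imset => y z; rewrite !inE => xy xz yz.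
have : y \in [set x; z] by rewrite -yz !inE eqxx orbT.
by rewrite !inE => /orP [] /eqP // yx; rewrite yx adj_irr in xy.
Qed.

Lemma sum_degree_bipartition (A : {set T}) :
  bipartition A -> \sum_(x in A) degree adj x = #|edges adj|.
Proof.
move=> A_bip; under eq_bigr do rewrite degreeE.
by rewrite sum_incident_bipartition // sum1_card.
Qed.

Lemma card_bipartition_pendant_le (A : {set T}) u :
  bipartition A -> u \in A -> degree adj u = 1 ->
  {in A :\ u, forall x, 1 < degree adj x} -> 2 * #|A| <= #|edges adj|.+1.
Proof.
move=> A_bip uA deg_u deg_gt1.
rewrite -(sum_degree_bipartition A_bip) (cardsD1 u A) uA (big_setD1 u) //= deg_u.
rewrite mulnDr muln1 -addSn leq_add2l mulnC -sum_nat_const.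
exact: leq_sum.
Qed.

Variable f : {set T} -> nat.

Definition color_class (c : nat) := [set x | fplus adj f x == c].

Lemma color_class_bipartition u :
  local_antimagic adj f -> color_number adj f <= 2 ->
  bipartition (color_class (fplus adj f u)).
Proof.
move=> [_ f_la] two_colors x y xy; rewrite !inE.
have colors_eq := size_undup_le2_eq two_colors.
have img z : fplus adj f z \in [seq fplus adj f z | z <- enum T].
  by apply: map_f; rewrite mem_enum.
have := f_la x y xy.
have [-> | xa] := eqVneq (fplus adj f x) (fplus adj f u).
  by rewrite eq_sym => /negPf ->.
have [-> | ya] := eqVneq (fplus adj f y) (fplus adj f u); first by [].
by rewrite (colors_eq _ _ _ (img u) (img x) (img y) xa ya) eqxx.
Qed.

Hypothesis f_bij : edge_bijection adj f.

Lemma degree_le_fplus x : degree adj x <= fplus adj f x.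
Proof.
rewrite degreeE /fplus; apply: leq_sum => e /andP [e_edge _].
by case: f_bij => _ /(_ e e_edge) /andP [].
Qed.

Lemma fplus_le_degree x : fplus adj f x <= #|edges adj| * degree adj x.
Proof.
rewrite degreeE /fplus big_distrr /= muln1; apply: leq_sum => e /andP [e_edge _].
by case: f_bij => _ /(_ e e_edge) /andP [].
Qed.

Lemma double_sum_edge_bijection :
  2 * \sum_(e in edges adj) f e = #|edges adj| * #|edges adj|.+1.
Proof.
case: f_bij => f_inj f_range f_onto.
rewrite -double_triangular_sum -big_enum /= -(big_map f predT id).
congr (2 * _); apply/perm_big/uniq_perm; rewrite /index_iota ?subSS ?subn0 ?iota_uniq //.
  by rewrite map_inj_in_uniq ?enum_uniq // => e1 e2; rewrite !mem_enum; exact: f_inj.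
move=> k; rewrite mem_iota add1n ltnS; apply/mapP/idP.
- by case=> e; rewrite mem_enum => e_edge ->; exact: f_range.
- by case/f_onto => e e_edge <-; exists e; rewrite ?mem_enum.
Qed.

Lemma card_color_class_bipartition c :
  bipartition (color_class c) ->
  2 * #|color_class c| * c = #|edges adj| * #|edges adj|.+1.
Proof.
move=> A_bip; rewrite -double_sum_edge_bijection -mulnA -sum_nat_const.
congr (2 * _); rewrite -(sum_incident_bipartition _ A_bip).
by apply: eq_bigr => x; rewrite inE => /eqP.
Qed.

End Graph.

Lemma odd_of_balanced_count q n a :
  0 < n -> 2 * n * a = q * q.+1 -> 2 * n <= q.+1 -> a <= q -> odd q.
Proof.
move=> n_gt0 count n_le a_le.
have q_eq : q.+1 = 2 * n by nia.
by move: (congr1 odd q_eq); rewrite /= oddM /= => /negbFE.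
Qed.

Theorem mainTheorem2 (T : finType) (adj : rel T) :
  simple_graph adj -> connected_graph adj -> bipartite adj ->
  ~~ odd #|edges adj| -> n_pendant adj = 1 ->
  forall f : {set T} -> nat, local_antimagic adj f -> 3 <= color_number adj f.
Proof.
move=> adj_simple _ _ q_even one_pendant f f_la.
rewrite leqNgt; apply/negP => /ltnSE two_colors.
have [f_bij _] := f_la.
set q := #|edges adj| in q_even.
have /cards1P [u pendant_u] : #|[set x | degree adj x == 1]| == 1.
  by rewrite -[X in _ == X]one_pendant.
have deg1 x : (degree adj x == 1) = (x == u) by rewrite -in_set1 -pendant_u inE.
have deg_u : degree adj u = 1 by apply/eqP; rewrite deg1.
set a := fplus adj f u; set A := color_class adj f a.
have A_bip : bipartition adj A := color_class_bipartition u f_la two_colors.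
have uA : u \in A by rewrite inE.
have a_gt0 : 0 < a by rewrite -deg_u (degree_le_fplus adj_simple f_bij).
have a_le : a <= q by rewrite -[q]muln1 -deg_u (fplus_le_degree adj_simple f_bij).
have deg_gt1 : {in A :\ u, forall x, 1 < degree adj x}.
  move=> x; rewrite in_setD1 inE => /andP [xu /eqP ax].
  have := fplus_le_degree adj_simple f_bij x; rewrite ax.
  by move: (deg1 x); rewrite (negPf xu); case: (degree adj x) => [|[|d]] //; rewrite muln0; lia.
have A_gt0 : 0 < #|A| by apply/card_gt0P; exists u.
have labels := card_color_class_bipartition f_bij A_bip.
have degrees := card_bipartition_pendant_le adj_simple A_bip uA deg_u deg_gt1.
by rewrite (odd_of_balanced_count A_gt0 labels degrees a_le) in q_even.
Qed.
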